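(* Let $0<\beta<\mu$ and $0<v_0<x_0$, and set $V(s)=v_0e^{\beta s}$. For $t>0$ let $$x_t(s)=\frac{v_0e^{\beta t}\sinh(\mu s)+x_0\sinh(\mu(t-s))}{\sinh(\mu t)},\qquad s\ge0,$$ (so $x_t(0)=x_0$, $x_t(t)=V(t)$). Define $$\phi_2(s)=\Big(1-\frac{\beta}{\mu}\Big)e^{(\beta+\mu)s}+\Big(1+\frac{\beta}{\mu}\Big)e^{(\beta-\mu)s}.$$ Then the equation $\phi_2(t)=2x_0/v_0$ has a unique positive solution $t_2$, and $$\operatorname{sgn}\big(x_t'(t)-V'(t)\big)=\begin{cases}-1 & t<t_2,\\ 0 & t=t_2,\\ +1 & t>t_2.\end{cases}$$ Moreover $t_1<t^o_V<t_2$, where $t_1=\frac{1}{\mu+\beta}\log\frac{x_0}{v_0}$ and $t^o_V$ is the unique positive solution of $\big(1-\frac{\beta}{\mu}\big)e^{(\mu+\beta)t}+\frac{\beta}{\mu}e^{(\beta-\mu)t}=\frac{x_0}{v_0}$.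
   Context: $x_t'(t)$ denotes the derivative of $s\mapsto x_t(s)$ evaluated at $s=t$. *)

From Stdlib Require Import Reals.
From Coquelicot Require Import Coquelicot.
Open Scope R_scope.

Definition Vfun (v0 beta : R) (s : R) : R := v0 * exp (beta * s).

Definition xpath (mu beta v0 x0 t : R) (s : R) : R :=
  (v0 * exp (beta * t) * sinh (mu * s) + x0 * sinh (mu * (t - s))) / sinh (mu * t).

Definition phi2 (mu beta : R) (s : R) : R :=
  (1 - beta / mu) * exp ((beta + mu) * s) + (1 + beta / mu) * exp ((beta - mu) * s).

(* left-hand side of the equation defining t^o_V *)
Definition psiV (mu beta : R) (t : R) : R :=
  (1 - beta / mu) * exp ((mu + beta) * t) + (beta / mu) * exp ((beta - mu) * t).

Definition t1 (mu beta v0 x0 : R) : R := / (mu + beta) * ln (x0 / v0).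

(** At the free end the path has slope
    [x_t'(t) = mu (V(t) cosh(mu t) - x0) / sinh(mu t)], hence
    [x_t'(t) - V'(t) = (mu v0 / 2) (phi2(t) - 2 x0 / v0) / sinh(mu t)].
    Both [phi2] and [psiV] have positive derivative on [(0, oo)], start at
    [phi2 0 = 2 < 2 x0 / v0] and [psiV 0 = 1 < x0 / v0], and grow like
    [exp((mu + beta) t)]; this yields [t2], [t^o_V] and the sign pattern.
    Since [exp((mu + beta) t1) = x0 / v0] and [exp((beta - mu) t1) < 1],
    [psiV(t1) < x0 / v0]; and [2 psiV - phi2 = (1 - beta / mu)
    (exp((beta + mu) t) - exp((beta - mu) t)) > 0] gives
    [phi2(t^o_V) < 2 x0 / v0].  Monotonicity then orders [t1 < t^o_V < t2]. *)

From Stdlib Require Import Reals Lra.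
From Coquelicot Require Import Coquelicot.
Open Scope R_scope.

Section IncreasingOnPositives.

Variable f : R -> R.
Hypothesis f_cont : continuity f.
Hypothesis f_incr : forall x y, 0 < x -> x < y -> f x < f y.

Lemma lt_of_increasing_on_pos x y : 0 < x -> 0 < y -> f x < f y -> x < y.
Proof.
  intros Hx Hy Hf.
  destruct (Rtotal_order x y) as [Hxy | [-> | Hyx]]; [easy | lra |].
  pose proof (f_incr y x Hy Hyx); lra.
Qed.

Lemma injective_on_pos x y : 0 < x -> 0 < y -> f x = f y -> x = y.
Proof.
  intros Hx Hy Hf.
  destruct (Rtotal_order x y) as [Hxy | [Exy | Hyx]]; [| easy |].
  - pose proof (f_incr x y Hx Hxy); lra.
  - pose proof (f_incr y x Hy Hyx); lra.
Qed.

Lemma exists_unique_pos_root c :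
  f 0 < c -> (exists B, 0 < B /\ c <= f B) ->
  exists t, 0 < t /\ f t = c /\ forall s, 0 < s -> f s = c -> s = t.
Proof.
  intros H0 [B [HB HcB]].
  destruct (IVT_gen f 0 B c f_cont) as [t [Ht Hft]].
  { rewrite Rmin_left, Rmax_right; lra. }
  rewrite Rmin_left, Rmax_right in Ht by lra.
  assert (Htpos : 0 < t).
  { destruct (Req_dec t 0) as [-> | Ht0]; lra. }
  exists t; repeat split; auto.
  intros s Hs Hfs; apply injective_on_pos; congruence.
Qed.

End IncreasingOnPositives.

Lemma exp_unbounded a k c :
  0 < a -> 0 < k -> exists B, 0 < B /\ c <= a * exp (k * B).
Proof.
  intros Ha Hk.
  exists (Rabs c / (a * k) + 1).
  assert (HB : 0 <= Rabs c / (a * k)).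
  { apply Rdiv_le_0_compat; [apply Rabs_pos | nra]. }
  split; [lra |].
  pose proof (exp_ineq1_le (k * (Rabs c / (a * k) + 1))) as Hexp.
  assert (Hlin : a * (k * (Rabs c / (a * k) + 1)) = Rabs c + a * k) by (field; lra).
  pose proof (Rle_abs c); nra.
Qed.

Lemma sinh_pos x : 0 < x -> 0 < sinh x.
Proof. intros Hx; rewrite <- sinh_0; now apply sinh_lt. Qed.

Lemma phi2_0 mu beta : phi2 mu beta 0 = 2.
Proof. unfold phi2; rewrite !Rmult_0_r, exp_0; ring. Qed.

Lemma psiV_0 mu beta : psiV mu beta 0 = 1.
Proof. unfold psiV; rewrite !Rmult_0_r, exp_0; ring. Qed.

Lemma continuity_phi2 mu beta : continuity (phi2 mu beta).
Proof.
  intros x; apply continuity_pt_filterlim.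
  apply (ex_derive_continuous (K := R_AbsRing) (V := R_NormedModule)).
  unfold phi2; auto_derive; auto.
Qed.

Lemma continuity_psiV mu beta : continuity (psiV mu beta).
Proof.
  intros x; apply continuity_pt_filterlim.
  apply (ex_derive_continuous (K := R_AbsRing) (V := R_NormedModule)).
  unfold psiV; auto_derive; auto.
Qed.

Section Profiles.

Variables mu beta : R.
Hypothesis beta_pos : 0 < beta.
Hypothesis beta_lt_mu : beta < mu.

Let ratio_pos : 0 < beta / mu.
Proof. apply Rdiv_lt_0_compat; lra. Qed.

Let ratio_lt_1 : beta / mu < 1.
Proof. apply (Rdiv_lt_1 beta mu); lra. Qed.

Lemma phi2_increasing x y : 0 < x -> x < y -> phi2 mu beta x < phi2 mu beta y.
Proof.
  intros Hx Hxy.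
  apply (incr_function _ (Finite 0) p_infty
    (fun s => (mu ^ 2 - beta ^ 2) / mu * (exp ((beta + mu) * s) - exp ((beta - mu) * s))));
    simpl; auto; intros s Hs _.
  - unfold phi2; auto_derive; auto; field; lra.
  - assert (exp ((beta - mu) * s) < exp ((beta + mu) * s)) by (apply exp_increasing; nra).
    assert (0 < (mu ^ 2 - beta ^ 2) / mu) by (apply Rdiv_lt_0_compat; nra).
    nra.
Qed.

Lemma psiV_increasing x y : 0 < x -> x < y -> psiV mu beta x < psiV mu beta y.
Proof.
  intros Hx Hxy.
  apply (incr_function _ (Finite 0) p_infty
    (fun s => (mu - beta) / mu *
              ((mu + beta) * exp ((mu + beta) * s) - beta * exp ((beta - mu) * s))));
    simpl; auto; intros s Hs _.
  - unfold psiV; auto_derive; auto; field; lra.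
  - assert (exp ((beta - mu) * s) < 1) by (rewrite <- exp_0; apply exp_increasing; nra).
    assert (1 < exp ((mu + beta) * s)) by (rewrite <- exp_0; apply exp_increasing; nra).
    assert (0 < (mu + beta) * exp ((mu + beta) * s) - beta * exp ((beta - mu) * s)) by nra.
    apply Rmult_lt_0_compat; [apply Rdiv_lt_0_compat |]; lra.
Qed.

Lemma phi2_unbounded c : exists B, 0 < B /\ c <= phi2 mu beta B.
Proof.
  destruct (exp_unbounded (1 - beta / mu) (beta + mu) c) as [B [HB Hc]]; try lra.
  exists B; split; [easy |].
  unfold phi2; pose proof (exp_pos ((beta - mu) * B)); nra.
Qed.

Lemma psiV_unbounded c : exists B, 0 < B /\ c <= psiV mu beta B.
Proof.
  destruct (exp_unbounded (1 - beta / mu) (mu + beta) c) as [B [HB Hc]]; try lra.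
  exists B; split; [easy |].
  unfold psiV; pose proof (exp_pos ((beta - mu) * B)); nra.
Qed.

Lemma phi2_lt_2psiV t : 0 < t -> phi2 mu beta t < 2 * psiV mu beta t.
Proof.
  intros Ht; unfold phi2, psiV; rewrite (Rplus_comm mu beta).
  assert (exp ((beta - mu) * t) < exp ((beta + mu) * t)) by (apply exp_increasing; nra).
  nra.
Qed.

Lemma log_time_pos q : 1 < q -> 0 < / (mu + beta) * ln q.
Proof.
  intros Hq; apply Rmult_lt_0_compat.
  - apply Rinv_0_lt_compat; lra.
  - rewrite <- ln_1; apply ln_increasing; lra.
Qed.

Lemma psiV_log_lt q : 1 < q -> psiV mu beta (/ (mu + beta) * ln q) < q.
Proof.
  intros Hq; pose proof (log_time_pos q Hq); unfold psiV.
  replace ((mu + beta) * (/ (mu + beta) * ln q)) with (ln q) by (field; lra).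
  rewrite exp_ln by lra.
  assert (exp ((beta - mu) * (/ (mu + beta) * ln q)) < 1)
    by (rewrite <- exp_0; apply exp_increasing; nra).
  nra.
Qed.

Variables v0 x0 : R.
Hypothesis v0_pos : 0 < v0.

Lemma Derive_Vfun t : Derive (Vfun v0 beta) t = beta * Vfun v0 beta t.
Proof. apply is_derive_unique; unfold Vfun; auto_derive; auto; ring. Qed.

Lemma Derive_xpath_at_end t : 0 < t ->
  Derive (xpath mu beta v0 x0 t) t
  = mu * (Vfun v0 beta t * cosh (mu * t) - x0) / sinh (mu * t).
Proof.
  intros Ht.
  assert (Hs : 0 < sinh (mu * t)) by (apply sinh_pos; nra).
  apply is_derive_unique; unfold xpath, Vfun.
  auto_derive; [lra |].
  rewrite Rplus_opp_r, Rmult_0_r, cosh_0.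
  field; lra.
Qed.

Lemma speed_gap_eq t : 0 < t ->
  Derive (xpath mu beta v0 x0 t) t - Derive (Vfun v0 beta) t
  = mu * v0 / 2 * (phi2 mu beta t - 2 * x0 / v0) / sinh (mu * t).
Proof.
  intros Ht.
  assert (Hs : 0 < sinh (mu * t)) by (apply sinh_pos; nra).
  assert (Ep : exp (mu * t) = cosh (mu * t) + sinh (mu * t)) by (unfold cosh, sinh; field).
  assert (Em : exp (- (mu * t)) = cosh (mu * t) - sinh (mu * t)) by (unfold cosh, sinh; field).
  rewrite Derive_xpath_at_end, Derive_Vfun by easy.
  unfold phi2, Vfun.
  replace ((beta + mu) * t) with (beta * t + mu * t) by ring.
  replace ((beta - mu) * t) with (beta * t + - (mu * t)) by ring.
  rewrite !exp_plus, Ep, Em.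
  field; repeat split; lra.
Qed.

Lemma speed_gap_sign t2 t :
  0 < t2 -> phi2 mu beta t2 = 2 * x0 / v0 -> 0 < t ->
  (t < t2 -> Derive (xpath mu beta v0 x0 t) t - Derive (Vfun v0 beta) t < 0) /\
  (t = t2 -> Derive (xpath mu beta v0 x0 t) t - Derive (Vfun v0 beta) t = 0) /\
  (t2 < t -> Derive (xpath mu beta v0 x0 t) t - Derive (Vfun v0 beta) t > 0).
Proof.
  intros Ht2 Hroot Ht.
  rewrite speed_gap_eq by easy.
  assert (Hs : 0 < / sinh (mu * t)) by (apply Rinv_0_lt_compat, sinh_pos; nra).
  assert (Hk : 0 < mu * v0 / 2) by nra.
  repeat split; intros Hcmp.
  - pose proof (phi2_increasing t t2 Ht Hcmp).
    assert (mu * v0 / 2 * (phi2 mu beta t - 2 * x0 / v0) < 0) by nra; nra.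
  - subst; rewrite Hroot; unfold Rdiv; ring.
  - pose proof (phi2_increasing t2 t Ht2 Hcmp).
    assert (mu * v0 / 2 * (phi2 mu beta t - 2 * x0 / v0) > 0) by nra; nra.
Qed.

End Profiles.

Theorem proposition1 (mu beta v0 x0 : R) :
  0 < beta -> beta < mu -> 0 < v0 -> v0 < x0 ->
  exists t2 tV : R,
    (* t2 is the unique positive solution of phi2(t) = 2 x0 / v0 *)
    (0 < t2 /\ phi2 mu beta t2 = 2 * x0 / v0 /\
     forall t, 0 < t -> phi2 mu beta t = 2 * x0 / v0 -> t = t2) /\
    (* sign of x_t'(t) - V'(t) for t > 0 *)
    (forall t, 0 < t ->
       (t < t2 -> Derive (xpath mu beta v0 x0 t) t - Derive (Vfun v0 beta) t < 0) /\
       (t = t2 -> Derive (xpath mu beta v0 x0 t) t - Derive (Vfun v0 beta) t = 0) /\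
       (t2 < t -> Derive (xpath mu beta v0 x0 t) t - Derive (Vfun v0 beta) t > 0)) /\
    (* t^o_V is the unique positive solution of psiV(t) = x0 / v0 *)
    (0 < tV /\ psiV mu beta tV = x0 / v0 /\
     forall t, 0 < t -> psiV mu beta t = x0 / v0 -> t = tV) /\
    t1 mu beta v0 x0 < tV /\ tV < t2.
Proof.
  intros Hb Hbm Hv Hx.
  assert (Hq : 1 < x0 / v0) by (apply (Rlt_div_r 1 x0 v0); lra).
  destruct (exists_unique_pos_root _ (continuity_phi2 mu beta) (phi2_increasing mu beta Hb Hbm)
              (2 * x0 / v0)) as [t2 [Ht2 [Ht2root Ht2uniq]]].
  { rewrite phi2_0; unfold Rdiv in *; lra. }
  { apply phi2_unbounded; lra. }
  destruct (exists_unique_pos_root _ (continuity_psiV mu beta) (psiV_increasing mu beta Hb Hbm)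
              (x0 / v0)) as [tV [HtV [HtVroot HtVuniq]]].
  { rewrite psiV_0; lra. }
  { apply psiV_unbounded; lra. }
  exists t2, tV; split; [| split; [| split; [| split]]].
  - easy.
  - intros t Ht; now apply speed_gap_sign.
  - easy.
  - apply (lt_of_increasing_on_pos _ (psiV_increasing mu beta Hb Hbm)); auto.
    + now apply log_time_pos.
    + rewrite HtVroot; now apply psiV_log_lt.
  - apply (lt_of_increasing_on_pos _ (phi2_increasing mu beta Hb Hbm)); auto.
    pose proof (phi2_lt_2psiV mu beta Hb Hbm tV HtV) as Hlt.
    rewrite HtVroot, Ht2root in *; unfold Rdiv in *; lra.
Qed.
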